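(* Fix integers $\ell < \mu < u$ and let $\mu' = \mu + 1$. Let $p \in (0,1)$ be any dyadic rational. Let $Z \sim \operatorname{DSG}_{\mu,p}$ and $Z' \sim \operatorname{DSG}_{\mu',p}$ be samples from the (unclamped) Dyadic Symmetric Geometric distribution centered at $\mu$ and $\mu'$, respectively. Let $Y = \max\{\ell, \min\{Z, u\}\}$ and $Y' = \max\{\ell, \min\{Z', u\}\}$. Then for every $y \in \mathbb{Z} \cap [\ell,u]$, \[ \frac{\Pr[Y = y]}{\Pr[Y' = y]} \le \frac{1}{1 - p} \quad\text{and}\quad \frac{\Pr[Y' = y]}{\Pr[Y = y]} \le \frac{1}{1 - p}, \] so the mechanism (outputting $Y$ when the center is $\mu$) is $\varepsilon$-differentially private with $\varepsilon = \ln\!\left(\tfrac{1}{1-p}\right)$.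
   Context: The Dyadic Symmetric Geometric distribution $\operatorname{DSG}_{c,p}$ with center $c\in\mathbb{Z}$ and dyadic parameter $p\in(0,1)$ is defined as follows: flip one unbiased coin to obtain a sign $S\in\{-1,+1\}$ and draw $G$ from a geometric distribution with parameter $p$ taking values in $\{0,1,2,\dots\}$; set $Z = c - G$ if $S=-1$ and $Z = c + 1 + G$ if $S=+1$. The censored version clamps $Z$ to $[\ell,u]$ via $\max\{\ell,\min\{Z,u\}\}$. Adjacent inputs are modeled by centers differing by one ($\mu$ vs. $\mu+1$). *)

From Stdlib Require Import Reals ZArith Lra.
From Coquelicot Require Import Coquelicot.
Open Scope R_scope.

Definition dyadic (p : R) : Prop :=
  exists (a k : nat), p = INR a / 2 ^ k.

Definition geom_pmf (p : R) (k : nat) : R := p * (1 - p) ^ k.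

Definition clamp (l u z : Z) : Z := Z.max l (Z.min z u).

Definition ind (b : bool) : R := if b then 1 else 0.

(* Pr[Y = y] where Y = clamp l u Z, Z ~ DSG_{c,p} generated by a fair sign S
   and G ~ Geom(p):  Z = c - G if S = -1,  Z = c + 1 + G if S = +1.
   The probability is computed over the joint law of (S, G). *)
Definition cdsg_prob (l u c : Z) (p : R) (y : Z) : R :=
  / 2 * Series (fun k => geom_pmf p k * ind (Z.eqb (clamp l u (c - Z.of_nat k)) y))
  + / 2 * Series (fun k => geom_pmf p k * ind (Z.eqb (clamp l u (c + 1 + Z.of_nat k)) y)).

(* Pr[Y = y] is half the mass that the downward arm clamp (c - G) puts on y plus
   half the mass of the upward arm clamp (c + 1 + G).  Each arm is explicit: mass
   p (1-p)^d at distance d from its start, and the whole tail (1-p)^d at the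
   clamping endpoint.  Moving the center from c to c + 1 multiplies the downward
   arm by 1 - p at every y <= c and divides the upward arm by 1 - p at every
   y >= c + 2, while the other arm puts no mass there; at the seam y = c + 1 the
   two probabilities are p/2 and p/2, or 1/2 and (1 + p)/2 when c + 1 = u.  The
   upward arm is the mirror image of the downward one under y |-> -y. *)

From Pilot Require Import Defs.
From Stdlib Require Import Reals ZArith Lia Lra.
From Coquelicot Require Import Coquelicot.
Open Scope R_scope.

Lemma is_series_rescale (c : R) (a b : nat -> R) (l l' : R) :
  is_series a l -> c * l = l' -> (forall k, c * a k = b k) -> is_series b l'.
Proof.
  intros Ha <- Eab.
  exact (is_series_ext _ _ _ Eab (is_series_scal_l c a l Ha)).
Qed.

Section GeometricSeries.

Variable p : R.
Hypothesis Hp : 0 < p < 1.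

Lemma is_series_geom_tail (n : nat) :
  is_series (fun k => geom_pmf p k * Defs.ind (Nat.leb n k)) ((1 - p) ^ n).
Proof.
  unfold geom_pmf; induction n as [|n IHn].
  - assert (Hgeom : is_series (fun k => (1 - p) ^ k) (/ (1 - (1 - p)))).
    { apply is_series_geom; rewrite Rabs_right; lra. }
    apply (is_series_rescale p _ _ _ _ Hgeom); [simpl; field; lra | intro k; simpl; ring].
  - apply is_series_decr_1, (is_series_rescale (1 - p) _ _ _ _ IHn).
    + cbn; unfold plus, opp; cbn; ring.
    + intro k; simpl; ring.
Qed.

Lemma Series_geom_tail (n : nat) (b : nat -> bool) :
  (forall k, b k = Nat.leb n k) ->
  Series (fun k => geom_pmf p k * Defs.ind (b k)) = (1 - p) ^ n.
Proof.
  intro Eb; apply is_series_unique.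
  apply (is_series_ext (fun k => geom_pmf p k * Defs.ind (Nat.leb n k))).
  { intro k; rewrite Eb; reflexivity. }
  exact (is_series_geom_tail n).
Qed.

Lemma Series_geom_point (n : nat) (b : nat -> bool) :
  (forall k, b k = Nat.eqb k n) ->
  Series (fun k => geom_pmf p k * Defs.ind (b k)) = p * (1 - p) ^ n.
Proof.
  intro Eb; apply is_series_unique.
  pose proof (is_series_minus _ _ _ _ (is_series_geom_tail n) (is_series_geom_tail (S n))) as Hdiff.
  apply (is_series_rescale 1 _ _ _ _ Hdiff).
  - unfold plus, opp; cbn; ring.
  - intro k; rewrite Eb.
    destruct (Nat.eqb_spec k n), (Nat.leb_spec n k), (Nat.leb_spec (S n) k); try lia;
      unfold Defs.ind, plus, opp; cbn; ring.
Qed.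

End GeometricSeries.

Lemma Series_geom_never (p : R) (b : nat -> bool) :
  (forall k, b k = false) -> Series (fun k => geom_pmf p k * Defs.ind (b k)) = 0.
Proof.
  intro Eb.
  rewrite (Series_ext _ (fun k => 0 * geom_pmf p k)) by (intro k; rewrite Eb; simpl; ring).
  rewrite Series_scal_l; ring.
Qed.

Definition ratios_le (K a b : R) : Prop := a / b <= K /\ b / a <= K.

Lemma Rdiv_le_inv (q a b : R) : 0 < q -> 0 < b -> q * a <= b -> a / b <= / q.
Proof.
  intros Hq Hb Hab; apply (Rmult_le_reg_l (q * b)); [nra|].
  replace (q * b * (a / b)) with (q * a) by (field; lra).
  replace (q * b * / q) with b by (field; lra).
  exact Hab.
Qed.

Lemma ratios_le_inv (q a b : R) :
  0 < q -> 0 < a -> 0 < b -> q * a <= b -> q * b <= a -> ratios_le (/ q) a b.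
Proof. intros; split; apply Rdiv_le_inv; assumption. Qed.

Definition lower_arm (l u c : Z) (p : R) (y : Z) : R :=
  Series (fun k => geom_pmf p k * Defs.ind (Z.eqb (clamp l u (c - Z.of_nat k)) y)).

Definition upper_arm (l u c : Z) (p : R) (y : Z) : R :=
  Series (fun k => geom_pmf p k * Defs.ind (Z.eqb (clamp l u (c + 1 + Z.of_nat k)) y)).

Lemma cdsg_prob_arms (l u c : Z) (p : R) (y : Z) :
  cdsg_prob l u c p y = / 2 * lower_arm l u c p y + / 2 * upper_arm l u c p y.
Proof. reflexivity. Qed.

Ltac decide_clamp_event :=
  intro; unfold clamp;
  repeat match goal with
  | |- context [Z.eqb ?a ?b] => destruct (Z.eqb_spec a b)
  | |- context [Nat.eqb ?a ?b] => destruct (Nat.eqb_spec a b)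
  | |- context [Nat.leb ?a ?b] => destruct (Nat.leb_spec a b)
  end; try reflexivity; lia.

Section ClampedArms.

Variable p : R.
Hypothesis Hp : 0 < p < 1.

Lemma lower_arm_floor (l u c : Z) :
  (l < u)%Z -> lower_arm l u c p l = (1 - p) ^ Z.to_nat (c - l).
Proof. intro Hlu; apply Series_geom_tail; [exact Hp | decide_clamp_event]. Qed.

Lemma lower_arm_inner (l u c y : Z) :
  (l < y <= c)%Z -> (c <= u)%Z -> lower_arm l u c p y = p * (1 - p) ^ Z.to_nat (c - y).
Proof. intros Hy Hcu; apply Series_geom_point; [exact Hp | decide_clamp_event]. Qed.

Lemma lower_arm_above (l u c y : Z) : (l < y)%Z -> (c < y)%Z -> lower_arm l u c p y = 0.
Proof. intros Hly Hcy; apply Series_geom_never; decide_clamp_event. Qed.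

Lemma upper_arm_mirror (l u c y : Z) : (l <= u)%Z ->
  upper_arm l u c p y = lower_arm (- u) (- l) (- (c + 1)) p (- y).
Proof. intro Hlu; apply Series_ext; decide_clamp_event. Qed.

Lemma lower_arm_succ (l u c y : Z) :
  (l <= y <= c)%Z -> (c < u)%Z -> lower_arm l u (c + 1) p y = (1 - p) * lower_arm l u c p y.
Proof.
  intros Hy Hcu.
  destruct (Z.eq_dec y l) as [->|Hyl].
  - rewrite !lower_arm_floor by lia.
    replace (Z.to_nat (c + 1 - l)) with (S (Z.to_nat (c - l))) by lia; simpl; ring.
  - rewrite !lower_arm_inner by lia.
    replace (Z.to_nat (c + 1 - y)) with (S (Z.to_nat (c - y))) by lia; simpl; ring.
Qed.

Lemma lower_arm_pos (l u c y : Z) :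
  (l < u)%Z -> (l <= y <= c)%Z -> (c <= u)%Z -> 0 < lower_arm l u c p y.
Proof.
  intros Hlu Hy Hcu.
  assert (Hpow : forall n, 0 < (1 - p) ^ n) by (intro; apply pow_lt; lra).
  destruct (Z.eq_dec y l) as [->|Hyl].
  - rewrite lower_arm_floor by lia; apply Hpow.
  - rewrite lower_arm_inner by lia; apply Rmult_lt_0_compat; [lra | apply Hpow].
Qed.

Lemma upper_arm_ceil (l u c : Z) :
  (l < u)%Z -> upper_arm l u c p u = (1 - p) ^ Z.to_nat (u - (c + 1)).
Proof.
  intro Hlu; rewrite upper_arm_mirror, lower_arm_floor by lia.
  do 2 f_equal; lia.
Qed.

Lemma upper_arm_inner (l u c y : Z) :
  (l <= c + 1 <= y)%Z -> (y < u)%Z ->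
  upper_arm l u c p y = p * (1 - p) ^ Z.to_nat (y - (c + 1)).
Proof.
  intros Hc Hyu; rewrite upper_arm_mirror, lower_arm_inner by lia.
  do 3 f_equal; lia.
Qed.

Lemma upper_arm_below (l u c y : Z) : (y <= c)%Z -> (y < u)%Z -> upper_arm l u c p y = 0.
Proof.
  intros Hyc Hyu.
  destruct (Z_le_gt_dec l u) as [Hlu|Hul].
  - rewrite upper_arm_mirror by exact Hlu; apply lower_arm_above; lia.
  - apply Series_geom_never; decide_clamp_event.
Qed.

Lemma upper_arm_pred (l u c y : Z) :
  (l <= c)%Z -> (c + 2 <= y <= u)%Z -> upper_arm l u c p y = (1 - p) * upper_arm l u (c + 1) p y.
Proof.
  intros Hlc Hy.
  rewrite !upper_arm_mirror by lia.
  replace (- (c + 1))%Z with (- (c + 1 + 1) + 1)%Z by lia.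
  apply lower_arm_succ; lia.
Qed.

Lemma upper_arm_pos (l u c y : Z) :
  (l < u)%Z -> (l <= c + 1 <= y)%Z -> (y <= u)%Z -> 0 < upper_arm l u c p y.
Proof.
  intros Hlu Hc Hyu; rewrite upper_arm_mirror by lia.
  apply lower_arm_pos; lia.
Qed.

Lemma cdsg_prob_ratios_below (l u c y : Z) :
  (l <= y <= c)%Z -> (c < u)%Z ->
  ratios_le (/ (1 - p)) (cdsg_prob l u c p y) (cdsg_prob l u (c + 1) p y).
Proof.
  intros Hy Hcu.
  rewrite !cdsg_prob_arms, !upper_arm_below, lower_arm_succ by lia.
  assert (Hpos : 0 < lower_arm l u c p y) by (apply lower_arm_pos; lia).
  assert (0 < p * lower_arm l u c p y) by (apply Rmult_lt_0_compat; lra).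
  apply ratios_le_inv; nra.
Qed.

Lemma cdsg_prob_ratios_above (l u c y : Z) :
  (l <= c)%Z -> (c + 2 <= y <= u)%Z ->
  ratios_le (/ (1 - p)) (cdsg_prob l u c p y) (cdsg_prob l u (c + 1) p y).
Proof.
  intros Hlc Hy.
  rewrite !cdsg_prob_arms, !lower_arm_above, upper_arm_pred by lia.
  assert (Hpos : 0 < upper_arm l u (c + 1) p y) by (apply upper_arm_pos; lia).
  assert (0 < p * upper_arm l u (c + 1) p y) by (apply Rmult_lt_0_compat; lra).
  apply ratios_le_inv; nra.
Qed.

Lemma cdsg_prob_ratios_seam (l u c : Z) :
  (l <= c)%Z -> (c < u)%Z ->
  ratios_le (/ (1 - p)) (cdsg_prob l u c p (c + 1)) (cdsg_prob l u (c + 1) p (c + 1)).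
Proof.
  intros Hlc Hcu.
  rewrite !cdsg_prob_arms, lower_arm_above, lower_arm_inner, Z.sub_diag by lia.
  destruct (Z.eq_dec (c + 1) u) as [Hu|Hu].
  - subst u; rewrite !upper_arm_ceil, Z.sub_diag by lia.
    replace (Z.to_nat (c + 1 - (c + 1 + 1))) with 0%nat by lia.
    apply ratios_le_inv; simpl; nra.
  - rewrite upper_arm_inner, upper_arm_below, Z.sub_diag by lia.
    apply ratios_le_inv; simpl; nra.
Qed.

End ClampedArms.

Theorem mainTheorem14 (l mu u : Z) (p : R) :
  (l < mu)%Z -> (mu < u)%Z ->
  0 < p < 1 -> dyadic p ->
  forall y : Z, (l <= y <= u)%Z ->
    cdsg_prob l u mu p y / cdsg_prob l u (mu + 1) p y <= / (1 - p) /\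
    cdsg_prob l u (mu + 1) p y / cdsg_prob l u mu p y <= / (1 - p).
Proof.
  (* Dyadicity only matters for exact sampling; the bound holds for all p in (0, 1). *)
  intros Hlmu Hmuu Hp _ y Hy.
  destruct (Z_le_gt_dec y mu) as [Hy_le | Hy_gt].
  - apply cdsg_prob_ratios_below; [exact Hp | lia | exact Hmuu].
  - destruct (Z.eq_dec y (mu + 1)) as [-> | Hy_ne].
    + apply cdsg_prob_ratios_seam; [exact Hp | lia | exact Hmuu].
    + apply cdsg_prob_ratios_above; [exact Hp | lia | lia].
Qed.
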